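(* Generalized PAV does not satisfy EJR-M: there exists an instance and an allocation selected by Generalized PAV that violates EJR-M.
   Context: Model: There is a set of agents $N=\{1,\dots,n\}$. The resource $R$ consists of a cake $C=[0,c]$ for a real $c\ge 0$ and a set of indivisible goods $G=\{g_1,\dots,g_m\}$ for an integer $m\ge 0$, with $\max(c,m)>0$. A piece of cake is a union of finitely many disjoint closed subintervals of $C$; its length $\ell(\cdot)$ is the sum of the lengths of its intervals. A bundle $R'=(C',G')$ consists of a piece of cake $C'\subseteq C$ and a set $G'\subseteq G$; its size is $s(R')=\ell(C')+|G'|$. Each agent $i$ approves a bundle $R_i=(C_i,G_i)$, and her utility for a bundle $R'$ is $u_i(R')=\ell(C_i\cap C')+|G_i\cap G'|$. A parameter $\alpha\in(0,c+m]$ is given; an allocation is a bundle $A$ with $s(A)\le\alpha$. For a real $t>0$, $N^*\subseteq N$ is $t$-cohesive if $|N^*|\ge t n/\alpha$ and $s(\bigcap_{i\in N^*}R_i)\ge t$. EJR-M: an allocation $A$ satisfies EJR-M if for every real $t>0$ and every $t$-cohesive group $N^*$ for which there exists a bundle $R^*\subseteq R$ with $s(R^* )=t$ and $R^*\subseteq R_i$ for all $i\in N^*$, there is $j\in N^*$ with $u_j(A)\ge t$. Generalized harmonic numbers: $H_x\coloneqq\sum_{k=1}^\infty\frac{x}{k(x+k)}$ for real $x\ge0$. Generalized PAV selects an allocation $R'$ with $s(R')\le\alpha$ maximizing $\sum_{i\in N}H_{u_i(R')}$. *)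

From HB Require Import structures.
From mathcomp Require Import all_boot all_order all_algebra.
From mathcomp Require Import all_classical all_reals all_analysis.
Set Implicit Arguments. Unset Strict Implicit. Unset Printing Implicit Defensive.
Import Order.TTheory GRing.Theory Num.Theory.
Local Open Scope classical_set_scope.
Local Open Scope ring_scope.

Section Defs.
Variable R : realType.

Definition is_piece (c : R) (P : set R) : Prop :=
  exists s : seq (R * R),
    (forall p, p \in s -> 0 <= p.1 /\ p.1 <= p.2 /\ p.2 <= c) /\
    (forall i j, (i < j < size s)%N ->
        (nth (0,0) s i).2 < (nth (0,0) s j).1 \/
        (nth (0,0) s j).2 < (nth (0,0) s i).1) /\
    P = \bigcup_(p in [set q | q \in s]) `[p.1, p.2]%classic.

Definition len (P : set R) : R := fine (@lebesgue_measure R P).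

Record bundle (m : nat) := Bundle { bcake : set R ; bgoods : {set 'I_m} }.

Definition is_bundle (c : R) (m : nat) (B : bundle m) : Prop := is_piece c (bcake B).

Definition bsize (m : nat) (B : bundle m) : R := len (bcake B) + (#|bgoods B|)%:R.

Definition bsub (m : nat) (B B' : bundle m) : Prop :=
  bcake B `<=` bcake B' /\ bgoods B \subset bgoods B'.

Definition util (m : nat) (Ri B : bundle m) : R :=
  len (bcake Ri `&` bcake B) + (#|bgoods Ri :&: bgoods B|)%:R.

Definition bigcap_bundle (n m : nat) (Rb : 'I_n -> bundle m) (S : {set 'I_n}) : bundle m :=
  Bundle [set x | forall i, i \in S -> bcake (Rb i) x]
         (\bigcap_(i in S) bgoods (Rb i)).

Definition genH (x : R) : R :=
  limn (fun N : nat => \sum_(1 <= k < N) (x / (k%:R * (x + k%:R)))).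

Definition valid_instance (n : nat) (c : R) (m : nat) (Rb : 'I_n -> bundle m) (alpha : R) : Prop :=
  (0 < n)%N /\ 0 <= c /\ 0 < Num.max c m%:R /\
  (forall i, is_bundle c (Rb i)) /\ 0 < alpha /\ alpha <= c + m%:R.

Definition is_allocation (c : R) (m : nat) (alpha : R) (A : bundle m) : Prop :=
  is_bundle c A /\ bsize A <= alpha.

Definition t_cohesive (n m : nat) (Rb : 'I_n -> bundle m) (alpha t : R) (S : {set 'I_n}) : Prop :=
  t * n%:R / alpha <= (#|S|)%:R /\ t <= bsize (bigcap_bundle Rb S).

Definition EJRM (n : nat) (c : R) (m : nat) (Rb : 'I_n -> bundle m) (alpha : R) (A : bundle m) : Prop :=
  forall (t : R) (S : {set 'I_n}), 0 < t -> t_cohesive Rb alpha t S ->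
    (exists Rs : bundle m, is_bundle c Rs /\ bsize Rs = t /\ forall i, i \in S -> bsub Rs (Rb i)) ->
    exists2 j, j \in S & t <= util (Rb j) A.

Definition PAV_score (n m : nat) (Rb : 'I_n -> bundle m) (A : bundle m) : R :=
  \sum_(i < n) genH (util (Rb i) A).

Definition PAV_selects (n : nat) (c : R) (m : nat) (Rb : 'I_n -> bundle m) (alpha : R) (A : bundle m) : Prop :=
  is_allocation c alpha A /\
  forall B : bundle m, is_allocation c alpha B -> PAV_score Rb B <= PAV_score Rb A.

End Defs.

(* Two agents approve only a single good, a third only the cake [0, 1], and alpha = 1.
   Selecting the good scores 2 H_1 >= 1, whereas any allocation without it scores
   H_x <= 1 for some x <= 1; an allocation containing the good has no room for cake.
   So PAV may select the good, although, as n / alpha = 3, the third agent alone is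
   1/3-cohesive and gets utility 0. *)

From mathcomp Require Import all_boot all_order all_algebra.
From mathcomp Require Import all_classical all_reals all_analysis.
From mathcomp Require Import ring lra.
Import Order.TTheory GRing.Theory Num.Theory.
Import numFieldNormedType.Exports.
Local Open Scope ring_scope.
Local Open Scope classical_set_scope.

Section Length.
Context {R : realType}.

Lemma lebesgue_measure_le {A B : set R} :
  A `<=` B -> (lebesgue_measure A <= lebesgue_measure B)%E.
Proof. exact: (le_outer_measure ((wlength (@idfun R))^*)%mu). Qed.

Lemma lebesgue_measure_itvcc (a b : R) :
  a <= b -> lebesgue_measure `[a, b] = (b - a)%:E.
Proof.
move=> ab; rewrite lebesgue_measure_itv /= lte_fin.
by case: ltgtP ab => // -> _; rewrite subrr.
Qed.

Lemma len_itv (a b : R) : a <= b -> len `[a, b] = b - a.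
Proof. by move=> ab; rewrite /len lebesgue_measure_itvcc. Qed.

Lemma len0 : len (set0 : set R) = 0.
Proof. by rewrite /len measure0. Qed.

Lemma len_ge0 (A : set R) : 0 <= len A.
Proof. exact/fine_ge0/measure_ge0. Qed.

Lemma lebesgue_measure_fin_num (a b : R) (A : set R) :
  A `<=` `[a, b] -> lebesgue_measure A \is a fin_num.
Proof.
move=> Aab; rewrite ge0_fin_numE ?measure_ge0 //.
apply: le_lt_trans (lebesgue_measure_le Aab) _.
by rewrite lebesgue_measure_itv /=; case: ifP => _; rewrite ?ltry.
Qed.

Lemma len_le (a b : R) (A B : set R) :
  A `<=` B -> B `<=` `[a, b] -> len A <= len B.
Proof.
move=> AB Bab; apply: fine_le; last exact: lebesgue_measure_le.
- exact: lebesgue_measure_fin_num (subset_trans AB Bab).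
- exact: lebesgue_measure_fin_num Bab.
Qed.

Lemma len_le_itv (a b : R) (A : set R) : a <= b -> A `<=` `[a, b] -> len A <= b - a.
Proof. by move=> ab Aab; rewrite -len_itv //; exact: len_le Aab (@subset_refl _ _). Qed.

End Length.

Section Pieces.
Context {R : realType}.

Lemma is_piece0 (c : R) : is_piece c set0.
Proof.
exists [::]; split => //; split; first by move=> i j; rewrite /= ltn0 andbF.
by apply/seteqP; split => x // [p]; rewrite /= in_nil.
Qed.

Lemma is_piece_itv (c a b : R) : 0 <= a -> a <= b -> b <= c -> is_piece c `[a, b].
Proof.
move=> a0 ab bc; exists [:: (a, b)]; split.
  by move=> p; rewrite inE => /eqP -> /=.
split; first by move=> [|i] [|j] //=; rewrite andbF.
apply/seteqP; split => x; first by exists (a, b) => //=; rewrite inE.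
by case=> p /=; rewrite inE => /eqP ->.
Qed.

Lemma is_piece_sub {c : R} {P : set R} : is_piece c P -> P `<=` `[0, c].
Proof.
case=> s [sC [_ ->]] x [p /= /sC [p0 [_ p2]]].
rewrite /= !in_itv /= => /andP[px xp].
by rewrite (le_trans p0 px) (le_trans xp p2).
Qed.

End Pieces.

Section GeneralizedHarmonic.
Context {R : realType}.

Definition genH_partial (x : R) (N : nat) : R :=
  \sum_(1 <= k < N) x / (k%:R * (x + k%:R)).

Lemma genHE (x : R) : genH x = limn (genH_partial x).
Proof. by []. Qed.

Lemma genH_partial_nd (x : R) : 0 <= x -> nondecreasing_seq (genH_partial x).
Proof.
move=> x0; apply/nondecreasing_seqP => -[|N]; first by rewrite /genH_partial !big_geq.
rewrite /genH_partial [leRHS]big_nat_recr //= lerDl.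
by apply: divr_ge0 => //; rewrite mulr_ge0 ?addr_ge0.
Qed.

(* For x <= 1 the k-th term is at most 1/k - 1/(k+1), so the partial sums telescope below 1. *)
Lemma genH_partial_le1 (x : R) (N : nat) : 0 <= x <= 1 -> genH_partial x N <= 1.
Proof.
move=> /andP[x0 x1]; case: N => [|N]; first by rewrite /genH_partial big_geq.
apply: (@le_trans _ _ (\sum_(1 <= k < N.+1) ((- k.+1%:R^-1) - (- k%:R^-1)))).
  apply: ler_sum_nat => k /andP[k1 _].
  have k0 : 0 < k%:R :> R by rewrite ltr0n.
  have xk : 0 < x + k%:R by rewrite ltr_wpDl.
  rewrite -subr_ge0.
  have -> : - k.+1%:R^-1 - - k%:R^-1 - x / (k%:R * (x + k%:R))
            = k%:R * (1 - x) / (k%:R * k.+1%:R * (x + k%:R)) :> R.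
    by rewrite -natr1; field; rewrite !lt0r_neq0 // natr1 ltr0n.
  by rewrite divr_ge0 ?mulr_ge0 ?subr_ge0 // ltW.
rewrite (telescope_sumr (fun k => - k%:R^-1)) // invr1 opprK.
by rewrite gerDr oppr_le0 invr_ge0.
Qed.

Lemma genH_partial_cvg (x : R) : 0 <= x <= 1 -> cvgn (genH_partial x).
Proof.
move=> x01; apply: nondecreasing_is_cvgn; first by apply: genH_partial_nd; case/andP: x01.
by exists 1 => _ [N _ <-]; exact: genH_partial_le1.
Qed.

Lemma genH0 : genH (0 : R) = 0.
Proof.
rewrite genHE; have -> : genH_partial 0 = fun=> 0.
  by apply: funext => N; rewrite /genH_partial big1 // => k _; rewrite mul0r.
exact: lim_cst.
Qed.

Lemma genH_le1 (x : R) : 0 <= x <= 1 -> genH x <= 1.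
Proof.
move=> x01; rewrite genHE; apply: limr_le; first exact: genH_partial_cvg.
by apply: nearW => N; exact: genH_partial_le1.
Qed.

Lemma genH1_ge_half : 2^-1 <= genH (1 : R).
Proof.
have x01 : 0 <= (1 : R) <= 1 by rewrite ler01 lexx.
rewrite genHE.
apply: le_trans (nondecreasing_cvgn_le (genH_partial_nd 1 ler01) (genH_partial_cvg 1 x01) 2).
by rewrite /genH_partial big_nat1 !mul1r.
Qed.

End GeneralizedHarmonic.

Lemma bigcap_bundle1 (R : realType) (n m : nat) (Rb : 'I_n -> bundle R m) (i : 'I_n) :
  bigcap_bundle Rb [set i]%SET = Rb i.
Proof.
transitivity (Bundle (bcake (Rb i)) (bgoods (Rb i))); last by case: (Rb i).
rewrite /bigcap_bundle big_set1; congr Bundle.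
by apply/seteqP; split => [x /(_ i (set11 _))|x ? j /set1P ->].
Qed.

Section Counterexample.
Variable R : realType.

Definition goods_bundle : bundle R 1 := Bundle set0 [set: 'I_1]%SET.
Definition cake_bundle : bundle R 1 := Bundle `[0, 1] finset.set0.

Definition profile (i : 'I_3) : bundle R 1 :=
  if i == ord_max then cake_bundle else goods_bundle.

Lemma util_goods_bundle (B : bundle R 1) : util goods_bundle B = #|bgoods B|%:R.
Proof. by rewrite /util set0I len0 finset.setTI add0r. Qed.

Lemma util_cake_bundle (B : bundle R 1) : util cake_bundle B = len (`[0, 1] `&` bcake B).
Proof. by rewrite /util finset.set0I cards0 addr0. Qed.

Lemma PAV_score_profile (B : bundle R 1) :
  PAV_score profile B = genH #|bgoods B|%:R *+ 2 + genH (len (`[0, 1] `&` bcake B)).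
Proof.
by rewrite /PAV_score !big_ord_recr big_ord0 /= /profile /= util_goods_bundle util_cake_bundle add0r.
Qed.

Lemma valid_profile : valid_instance 1 profile 1.
Proof.
split=> //; split; first exact: ler01.
split; first by rewrite lt_max ltr01.
split; last by rewrite ltr01 lerDl ler01.
move=> i; rewrite /is_bundle /profile; case: eqP => _ /=.
  by apply: is_piece_itv; rewrite ?ler01.
exact: is_piece0.
Qed.

Lemma PAV_selects_goods_bundle : PAV_selects 1 profile 1 goods_bundle.
Proof.
split.
  split; first exact: is_piece0.
  by rewrite /bsize /= len0 cardsT card_ord add0r.
move=> B [pieceB sizeB].
have genH1 : 2^-1 <= genH (1 : R) := genH1_ge_half.
rewrite !PAV_score_profile /= cardsT card_ord setI0 len0 genH0 addr0.
have cap_ge0 := len_ge0 (`[0, 1] `&` bcake B).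
move: sizeB; rewrite /bsize; have := max_card (bgoods B); rewrite card_ord.
case: #|bgoods B| => [|[|//]] _ sizeB.
- have cap_le1 : len (`[0, 1] `&` bcake B) <= 1.
    by rewrite -[leRHS]subr0; apply: len_le_itv; rewrite ?ler01 //; exact: subIsetl.
  have : genH (len (`[0, 1] `&` bcake B)) <= 1 by apply: genH_le1; rewrite cap_ge0.
  rewrite genH0 mul0rn add0r; lra.
- have cap_le : len (`[0, 1] `&` bcake B) <= len (bcake B).
    exact: len_le (@subIsetr _ _ _) (is_piece_sub pieceB).
  have -> : len (`[0, 1] `&` bcake B) = 0 by apply/eqP; rewrite eq_le cap_ge0; lra.
  by rewrite genH0 addr0.
Qed.

Lemma not_EJRM_goods_bundle : ~ EJRM 1 profile 1 goods_bundle.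
Proof.
have t0 : 0 < 3^-1 :> R by rewrite invr_gt0 ltr0n.
move=> /(_ 3^-1 [set ord_max]%SET t0) [].
- split; first by rewrite cards1 divr1 mulVf // pnatr_eq0.
  rewrite bigcap_bundle1 /profile eqxx /bsize cards0 addr0 len_itv ?ler01 // subr0; lra.
- exists (Bundle `[0, 3^-1] finset.set0); split.
    by apply: (@is_piece_itv _ 1 0 3^-1); lra.
  split; first by rewrite /bsize cards0 addr0 len_itv ?subr0.
  move=> i /set1P ->; rewrite /profile eqxx; split => /=; last exact: finset.sub0set.
  by apply: subset_itvl; rewrite bnd_simp; lra.
- by move=> j /set1P ->; rewrite /profile eqxx util_cake_bundle setI0 len0 leNgt t0.
Qed.

End Counterexample.

Theorem mainTheorem10 (R : realType) :
  exists (n : nat) (c : R) (m : nat) (Rb : 'I_n -> bundle R m) (alpha : R) (A : bundle R m),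
    valid_instance c Rb alpha /\ PAV_selects c Rb alpha A /\ ~ EJRM c Rb alpha A.
Proof.
exists 3%N, 1, 1%N, (@profile R), 1, (@goods_bundle R).
split; [exact: valid_profile | split; [exact: PAV_selects_goods_bundle | exact: not_EJRM_goods_bundle]].
Qed.
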